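(* Let $G$ be the cdf of a continuous real random variable. For $(\lambda_1,\lambda_2)\in\mathbb{R}^2$ define $$F_{R18a}(x)=(1+\lambda_1)G(x)+(\lambda_2-\lambda_1)G^2(x)-\lambda_2G^3(x),\qquad F_G(x)=\lambda_1 G(x)+(\lambda_2-\lambda_1)G^2(x)+(1-\lambda_2)G^3(x).$$ Let $\mathscr{S}_{R18a}=\{(\lambda_1,\lambda_2): -1\le\lambda_1\le1,\ -1\le\lambda_2\le1,\ -2\le\lambda_1+\lambda_2\le1\}$, $\mathscr{S}_{MR18a}=\{(\lambda_1,\lambda_2): -1\le\lambda_1\le2,\ -1\le\lambda_2\le2,\ -2\le\lambda_1+\lambda_2\le1\}$ and $\mathscr{S}_{MG}=\{(\lambda_1,\lambda_2):0\le\lambda_1\le3,\ 0\le\lambda_2\le3,\ 0\le\lambda_1+\lambda_2\le3\}$. Then: (i) For every $(\lambda_1,\lambda_2)\in\mathscr{S}_{R18a}$, $F_{R18a}$ is a cdf. (ii) For every $(\lambda_1,\lambda_2)\in\mathscr{S}_{MR18a}$, $F_{R18a}$ is a cdf. (iii) For every $(\lambda_1,\lambda_2)\in\mathscr{S}_{MR18a}$, $(\lambda_1+1,\lambda_2+1)\in\mathscr{S}_{MG}$ and $F_{R18a}$ with parameters $(\lambda_1,\lambda_2)$ coincides with $F_G$ with parameters $(\lambda_1+1,\lambda_2+1)$. (iv) For every $(\lambda_1,\lambda_2)\in\mathscr{S}_{MG}$, $(\lambda_1-1,\lambda_2-1)\in\mathscr{S}_{MR18a}$ and $F_G$ with parameters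 $(\lambda_1,\lambda_2)$ coincides with $F_{R18a}$ with parameters $(\lambda_1-1,\lambda_2-1)$.
   Context: A cdf is a nondecreasing, right-continuous function $F:\mathbb{R}\to[0,1]$ with limits $0$ at $-\infty$ and $1$ at $+\infty$. $G^k(x)=(G(x))^k$. *)

From Stdlib Require Import Reals.
From Coquelicot Require Import Coquelicot.
Open Scope R_scope.

Definition is_cdf (F : R -> R) : Prop :=
  (forall x, 0 <= F x <= 1) /\
  (forall x y, x <= y -> F x <= F y) /\
  (forall x, filterlim F (at_right x) (locally (F x))) /\
  is_lim F m_infty 0 /\
  is_lim F p_infty 1.

Definition F_R18a (l1 l2 : R) (G : R -> R) (x : R) : R :=
  (1 + l1) * G x + (l2 - l1) * (G x) ^ 2 - l2 * (G x) ^ 3.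

Definition F_G (l1 l2 : R) (G : R -> R) (x : R) : R :=
  l1 * G x + (l2 - l1) * (G x) ^ 2 + (1 - l2) * (G x) ^ 3.

Definition S_R18a (l1 l2 : R) : Prop :=
  -1 <= l1 <= 1 /\ -1 <= l2 <= 1 /\ -2 <= l1 + l2 <= 1.

Definition S_MR18a (l1 l2 : R) : Prop :=
  -1 <= l1 <= 2 /\ -1 <= l2 <= 2 /\ -2 <= l1 + l2 <= 1.

Definition S_MG (l1 l2 : R) : Prop :=
  0 <= l1 <= 3 /\ 0 <= l2 <= 3 /\ 0 <= l1 + l2 <= 3.

(* Shifting both parameters by one turns F_R18a into F_G, so (i)-(iv) reduce to showing
   that F_G a b G = p o G is a cdf for (a, b) in S_MG, where
   p(u) = a u + (b - a) u^2 + (1 - b) u^3.  The polynomial p fixes 0 and 1, and its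
   derivative has the Bernstein coefficients a, b, 3 - a - b on [0, 1], all nonnegative
   on S_MG; hence p is nondecreasing on [0, 1] and p o G inherits every cdf property
   of G. *)

From Stdlib Require Import Reals Lra Psatz FunctionalExtensionality.
From Coquelicot Require Import Coquelicot.
Open Scope R_scope.

Lemma is_cdf_comp (G h : R -> R) :
  is_cdf G -> (forall u, continuous h u) -> h 0 = 0 -> h 1 = 1 ->
  (forall u v, 0 <= u -> u <= v -> v <= 1 -> h u <= h v) ->
  is_cdf (fun x => h (G x)).
Proof.
  intros [G01 [Gmono [Gright [Gm Gp]]]] hc h0 h1 hmono.
  split; [|split; [|split; [|split]]].
  - intro x; destruct (G01 x).
    rewrite <- h0, <- h1; split; apply hmono; lra.
  - intros x y Hxy; destruct (G01 x), (G01 y); apply hmono; auto.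
  - intro x; exact (filterlim_comp _ _ _ G h _ _ _ (Gright x) (hc (G x))).
  - unfold is_lim; rewrite <- h0.
    exact (filterlim_comp _ _ _ G h _ _ _ Gm (hc 0)).
  - unfold is_lim; rewrite <- h1.
    exact (filterlim_comp _ _ _ G h _ _ _ Gp (hc 1)).
Qed.

(* The derivative of [F_G a b id] in the Bernstein basis of degree 2. *)
Definition F_G_deriv (a b w : R) : R :=
  a * (1 - w) ^ 2 + 2 * b * w * (1 - w) + (3 - a - b) * w ^ 2.

Lemma F_G_deriv_ge0 (a b w : R) :
  0 <= a -> 0 <= b -> a + b <= 3 -> 0 <= w <= 1 -> 0 <= F_G_deriv a b w.
Proof.
  intros Ha Hb Hab Hw; unfold F_G_deriv.
  assert (0 <= a * (1 - w) ^ 2) by (apply Rmult_le_pos; nra).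
  assert (0 <= 2 * b * w * (1 - w)) by (apply Rmult_le_pos; nra).
  assert (0 <= (3 - a - b) * w ^ 2) by (apply Rmult_le_pos; nra).
  lra.
Qed.

(* Simpson's rule, exact here because the integrand F_G_deriv is quadratic. *)
Lemma F_G_increment_simpson (a b u v : R) :
  F_G a b id v - F_G a b id u =
  (v - u) * ((F_G_deriv a b u + 4 * F_G_deriv a b ((u + v) / 2) + F_G_deriv a b v) / 6).
Proof. unfold F_G, F_G_deriv, id; field. Qed.

Lemma F_G_nondecreasing (a b : R) : S_MG a b ->
  forall u v, 0 <= u -> u <= v -> v <= 1 -> F_G a b id u <= F_G a b id v.
Proof.
  intros [Ha [Hb Hab]] u v Hu Huv Hv.
  assert (0 <= F_G_deriv a b u) by (apply F_G_deriv_ge0; lra).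
  assert (0 <= F_G_deriv a b ((u + v) / 2)) by (apply F_G_deriv_ge0; lra).
  assert (0 <= F_G_deriv a b v) by (apply F_G_deriv_ge0; lra).
  assert (0 <= F_G a b id v - F_G a b id u); [|lra].
  rewrite F_G_increment_simpson; apply Rmult_le_pos; lra.
Qed.

Lemma is_cdf_F_G (a b : R) (G : R -> R) : is_cdf G -> S_MG a b -> is_cdf (F_G a b G).
Proof.
  intros hG hab.
  change (is_cdf (fun x => F_G a b id (G x))).
  apply is_cdf_comp; auto.
  - intro u; apply (@ex_derive_continuous R_AbsRing R_NormedModule).
    unfold F_G, id; auto_derive; auto.
  - unfold F_G, id; ring.
  - unfold F_G, id; ring.
  - exact (F_G_nondecreasing a b hab).
Qed.

Lemma F_R18a_shift (l1 l2 : R) (G : R -> R) (x : R) :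
  F_R18a l1 l2 G x = F_G (l1 + 1) (l2 + 1) G x.
Proof. unfold F_R18a, F_G; ring. Qed.

Lemma F_G_shift (l1 l2 : R) (G : R -> R) (x : R) :
  F_G l1 l2 G x = F_R18a (l1 - 1) (l2 - 1) G x.
Proof. unfold F_R18a, F_G; ring. Qed.

Lemma S_MR18a_shift (l1 l2 : R) : S_MR18a l1 l2 -> S_MG (l1 + 1) (l2 + 1).
Proof. unfold S_MR18a, S_MG; lra. Qed.

Lemma S_MG_shift (l1 l2 : R) : S_MG l1 l2 -> S_MR18a (l1 - 1) (l2 - 1).
Proof. unfold S_MR18a, S_MG; lra. Qed.

Lemma S_R18a_sub_S_MR18a (l1 l2 : R) : S_R18a l1 l2 -> S_MR18a l1 l2.
Proof. unfold S_R18a, S_MR18a; lra. Qed.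

Lemma is_cdf_F_R18a (l1 l2 : R) (G : R -> R) :
  is_cdf G -> S_MR18a l1 l2 -> is_cdf (F_R18a l1 l2 G).
Proof.
  intros hG hl.
  replace (F_R18a l1 l2 G) with (F_G (l1 + 1) (l2 + 1) G)
    by (extensionality x; symmetry; apply F_R18a_shift).
  apply is_cdf_F_G; [exact hG | exact (S_MR18a_shift l1 l2 hl)].
Qed.

Theorem proposition3 (G : R -> R) (hG : is_cdf G) (hGc : forall x, continuous G x) :
  (forall l1 l2, S_R18a l1 l2 -> is_cdf (F_R18a l1 l2 G)) /\
  (forall l1 l2, S_MR18a l1 l2 -> is_cdf (F_R18a l1 l2 G)) /\
  (forall l1 l2, S_MR18a l1 l2 ->
     S_MG (l1 + 1) (l2 + 1) /\
     (forall x, F_R18a l1 l2 G x = F_G (l1 + 1) (l2 + 1) G x)) /\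
  (forall l1 l2, S_MG l1 l2 ->
     S_MR18a (l1 - 1) (l2 - 1) /\
     (forall x, F_G l1 l2 G x = F_R18a (l1 - 1) (l2 - 1) G x)).
Proof.
  split; [|split; [|split]]; intros l1 l2 hl.
  - exact (is_cdf_F_R18a l1 l2 G hG (S_R18a_sub_S_MR18a l1 l2 hl)).
  - exact (is_cdf_F_R18a l1 l2 G hG hl).
  - exact (conj (S_MR18a_shift l1 l2 hl) (F_R18a_shift l1 l2 G)).
  - exact (conj (S_MG_shift l1 l2 hl) (F_G_shift l1 l2 G)).
Qed.
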